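(* Let $B$ be a commutative ring with identity and $A$ a dense subring of $B$. Then the map $\Theta:\min(B)\to\min(A)$, $\Theta(P)=P\cap A$, is a homeomorphism; in particular $\min(A)$ is homeomorphic to $\min(B)$.
   Context: All rings are commutative with identity; subrings contain the identity. For a ring $R$, $\min(R)$ denotes the set of minimal prime ideals of $R$ with the subspace topology induced from the Zariski topology on $\operatorname{spec} R$. A subring $A$ of $B$ is dense in $B$ if for every ideal $I$ of $B$ and every $b\in B\setminus \operatorname{rad}(I)$ there exists $a\in B\setminus\operatorname{rad}(I)$ with $ab\in A$. *)

(* Subsets of a ring are represented as predicates R -> Prop. *)
From mathcomp Require Import all_boot all_algebra.
Set Implicit Arguments. Unset Strict Implicit. Unset Printing Implicit Defensive.
Import GRing.Theory.
Local Open Scope ring_scope.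

Section Defs.
Variable R : comPzRingType.

Definition is_subring (S : R -> Prop) : Prop :=
  [/\ S 1, (forall x y, S x -> S y -> S (x - y)) & (forall x y, S x -> S y -> S (x * y))].

Definition ideal_of (S : R -> Prop) (I : R -> Prop) : Prop :=
  [/\ (forall x, I x -> S x), I 0, (forall x y, I x -> I y -> I (x + y))
    & (forall a x, S a -> I x -> I (a * x))].

Definition prime_of (S : R -> Prop) (P : R -> Prop) : Prop :=
  [/\ ideal_of S P, ~ P 1
    & (forall x y, S x -> S y -> P (x * y) -> P x \/ P y)].

Definition minprime_of (S : R -> Prop) (P : R -> Prop) : Prop :=
  prime_of S P /\
  (forall Q, prime_of S Q -> (forall x, Q x -> P x) -> forall x, P x -> Q x).

Definition rad (I : R -> Prop) (b : R) : Prop := exists n : nat, I (b ^+ n).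

(* A is dense in B = R (the whole ring). *)
Definition dense (A : R -> Prop) : Prop :=
  forall I, ideal_of (fun _ => True) I ->
  forall b, ~ rad I b -> exists a, ~ rad I a /\ A (a * b).

(* Closed sets of min(S) for the subspace topology induced by the Zariski
   topology on spec S: C is closed iff C = V(X) ∩ min(S) for some X ⊆ S,
   where V(X) = {P prime | X ⊆ P}. Only membership of minimal primes matters. *)
Definition min_closed (S : R -> Prop) (C : (R -> Prop) -> Prop) : Prop :=
  exists X : R -> Prop, (forall x, X x -> S x) /\
    forall P, minprime_of S P -> (C P <-> forall x, X x -> P x).

Definition contract (A : R -> Prop) (P : R -> Prop) : R -> Prop :=
  fun x => A x /\ P x.

Definition min_homeo (S1 S2 : R -> Prop) (f : (R -> Prop) -> (R -> Prop)) : Prop :=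
  [/\ (forall P, minprime_of S1 P -> minprime_of S2 (f P)),
      (forall P Q, minprime_of S1 P -> minprime_of S1 Q -> f P = f Q -> P = Q),
      (forall Q, minprime_of S2 Q -> exists2 P, minprime_of S1 P & f P = Q),
      (forall C, min_closed S2 C -> min_closed S1 (fun P => C (f P)))
    & (forall C, min_closed S1 C ->
        min_closed S2 (fun Q => exists P, [/\ minprime_of S1 P, C P & f P = Q]))].
End Defs.

From Pilot Require Import Defs.
From mathcomp Require Import all_boot all_algebra.
From mathcomp Require Import boolp classical_sets.
Set Implicit Arguments. Unset Strict Implicit. Unset Printing Implicit Defensive.
Import GRing.Theory.
Local Open Scope classical_set_scope.
Local Open Scope ring_scope.

(* A prime P of a commutative ring is minimal iff every x in P satisfies
   s * x ^+ n = 0 for some s outside P, i.e. iff P becomes nil in the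
   localization at P.  Density provides, for every prime P of B and every b
   outside P, some a outside P with a * b in A.  Multiplying the witnesses s by
   such an a moves them into A, so the criterion passes from P to P ∩ A; two
   primes of B with the same trace on A contain each other; and V(X) ∩ min(B)
   is mapped onto V(A ∩ BX) ∩ min(A).  For surjectivity, Zorn's lemma enlarges
   A \ Q, for a minimal prime Q of A, to a maximal multiplicative set avoiding 0;
   its complement is a prime of B satisfying the criterion, whose trace on A is
   contained in Q and hence equal to Q. *)

Section Ring.
Variable B : comPzRingType.
Implicit Types (S M N P Q : set B) (x y s t : B).

Definition multiplicative M := forall x y, M x -> M y -> M (x * y).

Definition nil_localized P :=
  forall x, P x -> exists s n, ~ P s /\ s * x ^+ n = 0.

Lemma subringT : is_subring [set: B].
Proof. by []. Qed.

Lemma subring0 S : is_subring S -> S 0.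
Proof. by case=> S1 SB _; rewrite -(subrr 1); apply: SB. Qed.

Lemma subringD S x y : is_subring S -> S x -> S y -> S (x + y).
Proof.
move=> hS Sx Sy; have S0 := subring0 hS; case: hS => _ SB _.
by rewrite -[y]opprK -[- y]sub0r; apply/SB/SB.
Qed.

Lemma multiplicative_expr M x n : M 1 -> multiplicative M -> M x -> M (x ^+ n).
Proof.
by move=> M1 Mmul Mx; elim: n => [|n IH]; rewrite ?expr0 // exprS; apply: Mmul.
Qed.

Lemma subringX S x n : is_subring S -> S x -> S (x ^+ n).
Proof. by case=> S1 _ Smul; apply: multiplicative_expr. Qed.

Lemma prime_rad S P x : is_subring S -> prime_of S P -> S x -> Defs.rad P x -> P x.
Proof.
move=> hS [_ nP1 Pmul] Sx [n]; elim: n => [|n IH]; first by rewrite expr0.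
by rewrite exprS => /Pmul [] //; apply: subringX.
Qed.

Lemma mulr_expr_eq0W s x m n : s * x ^+ m = 0 -> (m <= n)%N -> s * x ^+ n = 0.
Proof. by move=> sx0 /subnKC <-; rewrite exprD mulrA sx0 mul0r. Qed.

Lemma mulr_exprD_eq0 s t x y m n :
  s * x ^+ m = 0 -> t * y ^+ n = 0 -> s * t * (x + y) ^+ (m + n) = 0.
Proof.
move=> sx0 ty0; rewrite exprDn mulr_sumr big1 // => i _.
rewrite mulrnAr mulrACA; case: (leqP n i) => [le_ni|lt_in].
  by rewrite (mulr_expr_eq0W ty0 le_ni) mulr0 mul0rn.
have le_m : (m <= m + n - i)%N by rewrite -addnBA ?leq_addr // ltnW.
by rewrite (mulr_expr_eq0W sx0 le_m) mul0r mul0rn.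
Qed.

Lemma exists_maximal_multiplicative M : multiplicative M -> ~ M 0 ->
  exists N, [/\ M `<=` N, multiplicative N, ~ N 0 &
    forall N', N `<=` N' -> multiplicative N' -> ~ N' 0 -> N' `<=` N].
Proof.
move=> Mmul nM0.
(* Zorn's lemma runs over the X with [M `|` X] good, so that the union of the
   empty chain is still admissible. *)
pose good N := multiplicative N /\ ~ N 0.
have [X [[Xmul nX0] Xmax]] : exists X, good (M `|` X) /\
    forall Y, X `<` Y -> ~ good (M `|` Y).
  apply: (@Zorn_bigcup _ (fun X => good (M `|` X))) => F Fgood Ftot; split; last first.
    by case=> [//|[X FX X0]]; apply: (Fgood X FX).2; right.
  move=> x y hx hy.
  have [[X0 FX0]|noF] := pselect (exists X, F X); last first.
    have inM z : (M `|` \bigcup_(X in F) X) z -> M z.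
      by case=> [//|[X FX _]]; case: noF; exists X.
    by left; apply: Mmul; apply: inM.
  have lift z : (M `|` \bigcup_(X in F) X) z -> exists2 X, F X & (M `|` X) z.
    by case=> [Mz|[X FX Xz]]; [exists X0 => //; left|exists X => //; right].
  have up X z : F X -> (M `|` X) z -> (M `|` \bigcup_(X in F) X) z.
    by move=> FX [Mz|Xz]; [left|right; exists X].
  have [X1 FX1 hx1] := lift x hx; have [X2 FX2 hy2] := lift y hy.
  have [X12|X21] := Ftot X1 X2 FX1 FX2.
    by apply: (up X2) => //; apply: (Fgood X2 FX2).1 => //; apply: setUS hx1.
  by apply: (up X1) => //; apply: (Fgood X1 FX1).1 => //; apply: setUS hy2.
exists (M `|` X); split=> // N MXN Nmul nN0.
have MN : M `<=` N by move=> z Mz; apply: MXN; left.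
have XN : X `<=` N by move=> z Xz; apply: MXN; right.
have goodN : good (M `|` N) by rewrite (setUidr MN).
suff NX : N `<=` X by move=> z /NX; right.
by apply: contrapT => nNX; apply: Xmax N (conj XN nNX) goodN.
Qed.

Section MaximalMultiplicative.
Variable N : set B.
Hypotheses (N1 : N 1) (Nmul : multiplicative N) (nN0 : ~ N 0).
Hypothesis Nmax :
  forall N', N `<=` N' -> multiplicative N' -> ~ N' 0 -> N' `<=` N.

Lemma maximal_multiplicative_annih x :
  ~ N x -> exists s n, N s /\ s * x ^+ n = 0.
Proof.
move=> nNx; apply: contrapT => noannih.
pose Nx y := exists s n, N s /\ y = s * x ^+ n.
have NNx : N `<=` Nx by move=> y Ny; exists y, 0%N; rewrite expr0 mulr1.
apply: nNx; apply: (Nmax NNx); last by exists 1, 1%N; rewrite expr1 mul1r.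
- move=> _ _ [s [m [Ns ->]]] [t [n [Nt ->]]].
  by exists (s * t), (m + n)%N; rewrite exprD mulrACA; split => //; apply: Nmul.
- by case=> s [n [Ns sx0]]; apply: noannih; exists s, n.
Qed.

Lemma prime_compl_maximal_multiplicative :
  prime_of [set: B] (~` N) /\ nil_localized (~` N).
Proof.
have NX := multiplicative_expr _ N1 Nmul.
split; last first.
  move=> x /maximal_multiplicative_annih [s [n [Ns sx0]]].
  by exists s, n; split.
split; [split| |] => //.
- move=> x y nNx nNy Nxy.
  have [s [m [Ns sx0]]] := maximal_multiplicative_annih nNx.
  have [t [n [Nt ty0]]] := maximal_multiplicative_annih nNy.
  apply: nN0; rewrite -(mulr_exprD_eq0 sx0 ty0).
  by apply: Nmul; [apply: Nmul | apply: NX].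
- move=> a x _ nNx Nax.
  have [s [n [Ns sx0]]] := maximal_multiplicative_annih nNx.
  by apply: nN0; rewrite -[0](mulr0 (a ^+ n)) -sx0 mulrCA -exprMn; apply: Nmul => //; apply: NX.
- move=> x y _ _ nNxy; apply: contrapT => /not_orP[/contrapT Nx /contrapT Ny].
  exact/nNxy/Nmul.
Qed.
End MaximalMultiplicative.

Lemma exists_nil_localized_prime M : M 1 -> multiplicative M -> ~ M 0 ->
  exists P, [/\ prime_of [set: B] P, nil_localized P & forall x, M x -> ~ P x].
Proof.
move=> M1 Mmul nM0.
have [N [MN Nmul nN0 Nmax]] := exists_maximal_multiplicative Mmul nM0.
have [Pprime Pnil] := prime_compl_maximal_multiplicative (MN _ M1) Nmul nN0 Nmax.
exists (~` N); split => // x Mx; apply; exact: MN.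
Qed.

Lemma nil_localized_minprime P :
  prime_of [set: B] P -> nil_localized P -> minprime_of [set: B] P.
Proof.
move=> Pprime Pnil; split => // Q Qprime QP x Px.
have [[_ Q0 _ _] _ Qmul] := Qprime.
have [s [n [nPs sx0]]] := Pnil x Px.
have [Qs|Qxn] : Q s \/ Q (x ^+ n) by apply: Qmul; rewrite ?sx0.
  by case: nPs; apply: QP.
by apply: (prime_rad subringT Qprime I); exists n.
Qed.

Lemma minprime_nil_localized P : minprime_of [set: B] P -> nil_localized P.
Proof.
move=> [Pprime Pmin] x Px; have [[_ P0 _ _] nP1 Pmul] := Pprime.
have nPmul : multiplicative (~` P).
  by move=> y z nPy nPz /(Pmul y z I I) [].
have [Q [Qprime Qnil PQ]] := exists_nil_localized_prime nP1 nPmul (@^~ P0).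
have QP : Q `<=` P by move=> y Qy; apply: contrapT => /PQ.
have [s [n [nQs sx0]]] := Qnil x (Pmin Q Qprime QP x Px).
by exists s, n; split => // /(Pmin Q Qprime QP).
Qed.

Lemma minprimeP P :
  minprime_of [set: B] P <-> prime_of [set: B] P /\ nil_localized P.
Proof.
split=> [Pmin|[]]; last exact: nil_localized_minprime.
by split; [case: Pmin|apply: minprime_nil_localized].
Qed.

Section Contraction.
Variable A : set B.
Hypotheses (Asub : is_subring A) (Adense : dense A).

Lemma contract_prime P : prime_of [set: B] P -> prime_of A (contract A P).
Proof.
move=> [[_ P0 PD PM] nP1 Pmul]; have [A1 _ AM] := Asub.
split; [split| |].
- by move=> x [].
- by split; [apply: subring0|].
- by move=> x y [Ax Px] [Ay Py]; split; [apply: subringD|apply: PD].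
- by move=> a x Aa [Ax Px]; split; [apply: AM|apply: PM].
- by case.
- by move=> x y Ax Ay [_ /(Pmul x y I I)] [] ?; [left|right].
Qed.

Lemma dense_prime P b :
  prime_of [set: B] P -> ~ P b -> exists a, ~ P a /\ A (a * b).
Proof.
move=> Pprime nPb.
have [a [nradPa Aab]] : exists a, ~ Defs.rad P a /\ A (a * b).
  by apply: Adense => [|radPb]; [case: Pprime|exact/nPb/(prime_rad subringT Pprime I)].
by exists a; split => // Pa; apply: nradPa; exists 1%N; rewrite expr1.
Qed.

Lemma contract_subset P Q : prime_of [set: B] P -> prime_of [set: B] Q ->
  contract A P `<=` contract A Q -> P `<=` Q.
Proof.
move=> [[_ _ _ PM] _ _] Qprime PQ x Px; apply: contrapT => nQx.
have [a [nQa Aax]] := dense_prime Qprime nQx.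
have [_ _ Qmul] := Qprime.
by have [] := Qmul a x I I (PQ _ (conj Aax (PM a x I Px))).2.
Qed.

Lemma contract_inj P Q : prime_of [set: B] P -> prime_of [set: B] Q ->
  contract A P = contract A Q -> P = Q.
Proof.
move=> Pprime Qprime PQ; rewrite eqEsubset.
by split; apply: contract_subset; rewrite // PQ.
Qed.

Lemma contract_minprime P :
  minprime_of [set: B] P -> minprime_of A (contract A P).
Proof.
move=> /minprimeP[Pprime Pnil]; have [_ _ Pmul] := Pprime.
split=> [|Q Qprime QP x [Ax Px]]; first exact: contract_prime.
have [[_ Q0 _ _] _ Qmul] := Qprime.
have [s [n [nPs sx0]]] := Pnil x Px.
have [a [nPa Aas]] := dense_prime Pprime nPs.
have Qasx : Q (a * s * x ^+ n) by rewrite -mulrA sx0 mulr0.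
have [Qas|Qxn] := Qmul _ _ Aas (subringX n Asub Ax) Qasx.
  by have [] := Pmul a s I I (QP _ Qas).2.
by apply: (prime_rad Asub Qprime Ax); exists n.
Qed.

Lemma contract_minprime_surj Q : minprime_of A Q ->
  exists2 P, minprime_of [set: B] P & contract A P = Q.
Proof.
move=> [Qprime Qmin]; have [[_ Q0 _ _] nQ1 Qmul] := Qprime.
have [A1 _ AM] := Asub.
have AQmul : multiplicative (A `\` Q).
  by move=> x y [Ax nQx] [Ay nQy]; split; [apply: AM|case/Qmul].
have [P [Pprime Pnil AQP]] :=
  exists_nil_localized_prime (conj A1 nQ1) AQmul (fun AQ0 => AQ0.2 Q0).
exists P; first exact/minprimeP.
have PQ : contract A P `<=` Q.
  by move=> x [Ax Px]; apply: contrapT => nQx; apply: AQP Px.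
by rewrite eqEsubset; split => //; apply: Qmin => //; apply: contract_prime.
Qed.

Lemma contract_preimage_closed C :
  min_closed A C -> min_closed [set: B] (fun P => C (contract A P)).
Proof.
move=> [X [XA CX]]; exists X; split => // P Pmin.
rewrite CX; last exact: contract_minprime.
by split=> XP x Xx; [case: (XP x Xx)|split; [apply: XA|apply: XP]].
Qed.

Lemma contract_image_closed C : min_closed [set: B] C ->
  min_closed A (fun Q => exists P, [/\ minprime_of [set: B] P, C P & contract A P = Q]).
Proof.
move=> [X [_ CX]].
exists (fun y => A y /\ exists a x, X x /\ y = a * x); split=> [y [] //|Q Qmin].
split=> [[P [Pmin CP <-]] y [Ay [a [x [Xx y_ax]]]]|XQ].
  have [[[_ _ _ PM] _ _] _] := Pmin.
  by split => //; rewrite y_ax; apply: PM => //; apply: (CX P Pmin).1.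
have [P Pmin PQ] := contract_minprime_surj Qmin.
exists P; split => //; apply/(CX P Pmin) => x Xx; apply: contrapT => nPx.
have [[_ _ Pmul] _] := Pmin.
have [a [nPa Aax]] := dense_prime Pmin.1 nPx.
have : contract A P (a * x) by rewrite PQ; apply: XQ; split => //; exists a, x.
by case=> _ /(Pmul a x I I) [].
Qed.

End Contraction.
End Ring.

Theorem mainTheorem7 (B : comPzRingType) (A : B -> Prop) :
  is_subring A -> dense A ->
  min_homeo (fun _ : B => True) A (contract A).
Proof.
move=> Asub Adense; split.
- by move=> P; apply: contract_minprime.
- by move=> P Q Pmin Qmin; apply: contract_inj Pmin.1 Qmin.1.
- exact: contract_minprime_surj.
- exact: contract_preimage_closed.
- exact: contract_image_closed.
Qed.
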